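(* Let $y_1=x_2x_1x_2^{-1}$. For every integer $n\ge1$, $x_1^n$ has one of the forms $M_0([23,224,138],[59,136,495],\dots)$, $M_0([23,224,138],[28,88,341],\dots)$, $M_{2^r-1}([39,208,186],[0,0,0],\dots)$ for some odd $r\ge1$, or $M_{2^r-1}([23,224,138],[0,0,0],\dots)$ for some even $r\ge2$; and for every $n\ge1$, $y_1^n$ has one of the forms $M_0([23,224,138],[33,146,501],\dots)$, $M_0([23,224,138],[6,66,335],\dots)$, $M_{2^r-1}([39,208,186],[0,106,247],\dots)$ for some odd $r\ge1$, or $M_{2^r-1}([23,224,138],[26,26,26],\dots)$ for some even $r\ge2$.
   Context: Consider infinite upper unitriangular block matrices $X=(X_{r,s})_{r,s\ge1}$ whose entries are $3\times3$ matrices over $\mathbb F_2$, with $X_{r,r}=I$, $X_{r,s}=0$ for $s<r$, and whose upper diagonals are $3$-periodic: for each $j\ge1$ there are $a_{j1},a_{j2},a_{j3}\in M(3,\mathbb F_2)$ with $X_{r,r+j}=a_{j,i}$, where $i\in\{1,2,3\}$, $i\equiv r\pmod 3$; $a_j=[a_{j1},a_{j2},a_{j3}]$ is the $j$-th upper diagonal. For $l\ge0$, $M_l(c_1,c_2,\dots)$ denotes such a matrix whose first $l$ upper diagonals are zero and whose $(l+1)$-st, $(l+2)$-nd, $\dots$ upper diagonals are $c_1,c_2,\dots$; diagonals hidden in ''$\dots$'' are unspecified, while a matrix written $M_0(c_1,\dots,c_m)$ without dots has all further diagonals zero. A matrix $u=(u_{pq})\in M(3,\mathbb F_2)$ is encoded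 by the integer $256u_{11}+128u_{12}+64u_{13}+32u_{21}+16u_{22}+8u_{23}+4u_{31}+2u_{32}+u_{33}$, and a diagonal by the triple of integers of its three blocks. The elements are $x_1=M_0([23,224,138],[59,136,495],[26,488,227],[23,224,0],[59,0,0])$, $x_2=M_0([46,68,217],[12,194,363],[26,326,77],[46,68,0],[12,0,0])$. *)

From HB Require Import structures.
From mathcomp Require Import all_boot all_order all_algebra.
Set Implicit Arguments. Unset Strict Implicit. Unset Printing Implicit Defensive.
Import GRing.Theory.
Local Open Scope ring_scope.

Notation blk := 'M['F_2]_3.

(* An infinite block matrix X = (X_{r,s})_{r,s >= 1}; only indices r,s >= 1
   are meaningful (index 0 is ignored everywhere). *)
Definition bmat := nat -> nat -> blk.

(* Product of (upper triangular) infinite block matrices: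
   (XY)_{r,s} = sum_{r <= t <= s} X_{r,t} Y_{t,s}. *)
Definition bmul (X Y : bmat) : bmat :=
  fun r s => \sum_(r <= t < s.+1) X r t *m Y t s.

Definition bone : bmat := fun r s => if r == s then 1%:M else 0.

Definition bpow (X : bmat) (n : nat) : bmat := iter n (bmul X) bone.

(* Inverse of a unitriangular X = I + N (N strictly upper triangular):
   X^{-1} = sum_k (-N)^k, a finite sum entrywise since (N^k)_{r,s} = 0 for k > s - r. *)
Definition bneg_strict (X : bmat) : bmat := fun r s => bone r s - X r s.
Definition binv (X : bmat) : bmat :=
  fun r s => \sum_(k < (s - r).+1) bpow (bneg_strict X) k r s.

(* Integer encoding: u = sum 2^(8 - (3p+q)) u_{pq} (0-based p,q). *)
Definition decode (c : nat) : blk :=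
  \matrix_(p < 3, q < 3) ((odd (c %/ 2 ^ (8 - (3 * p + q)))%N)%:R : 'F_2).

Definition diag3 := (nat * nat * nat)%type.

(* block of a diagonal at row r (r >= 1): a_{j,i} with i = r mod 3 in {1,2,3} *)
Definition sel (d : diag3) (r : nat) : nat :=
  let: (a, b, c) := d in
  if (r %% 3 == 1)%N then a else if (r %% 3 == 2)%N then b else c.

Definition in_class (X : bmat) : Prop :=
  (forall r, (1 <= r)%N -> X r r = 1%:M) /\
  (forall r s, (1 <= s)%N -> (s < r)%N -> X r s = 0) /\
  (forall r j, (1 <= r)%N -> (1 <= j)%N -> X (r + 3)%N (r + 3 + j)%N = X r (r + j)%N).

(* X has the form M_l(c1, c2, ...) : first l upper diagonals zero,
   (l+1)-st diagonal c1, (l+2)-nd diagonal c2, further diagonals unspecified. *)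
Definition has_form (X : bmat) (l : nat) (c1 c2 : diag3) : Prop :=
  in_class X /\
  (forall r j, (1 <= r)%N -> (1 <= j <= l)%N -> X r (r + j)%N = 0) /\
  (forall r, (1 <= r)%N -> X r (r + l.+1)%N = decode (sel c1 r)) /\
  (forall r, (1 <= r)%N -> X r (r + l.+2)%N = decode (sel c2 r)).

(* M_0(d_1, ..., d_m) with all further diagonals zero. *)
Definition mk_mat (ds : seq diag3) : bmat :=
  fun r s => if (s < r)%N then 0 else if s == r then 1%:M
             else decode (sel (nth (0, 0, 0)%N ds (s - r).-1) r).

Definition x1 : bmat :=
  mk_mat [:: (23, 224, 138); (59, 136, 495); (26, 488, 227); (23, 224, 0); (59, 0, 0)]%N.
Definition x2 : bmat :=
  mk_mat [:: (46, 68, 217); (12, 194, 363); (26, 326, 77); (46, 68, 0); (12, 0, 0)]%N.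

Definition y1 : bmat := bmul (bmul x2 x1) (binv x2).

(* Over F_2, x1 = 1 + E with E strictly upper triangular, so x1^2 = 1 + F with F = E^2;
   F vanishes on its first and third diagonals and has second diagonal [39,208,186].
   Squaring a matrix that vanishes below diagonal d and on diagonal d + 1 gives one that
   vanishes below diagonal 2d and on diagonal 2d + 1, so F^(2^j) starts at diagonal
   2^(j+1), whose entries alternate between [39,208,186] and [23,224,138] with j, and
   vanishes on the next diagonal.  In characteristic 2, if K vanishes below diagonal l
   then (1 + K)^m agrees with 1 + K or with 1 below diagonal 2l, according to the parity
   of m.  Hence x1^(2k+1) = x1 (1 + F)^k agrees with x1 (1 + F) or x1 on the first
   diagonals, and for odd m, x1^(2^(j+1) m) = (1 + F^(2^j))^m agrees with 1 + F^(2^j).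
   For y1 = x2 x1 x2^-1 we have y1^n = x2 x1^n x2^-1, and conjugating 1 + K by a
   unitriangular matrix with first diagonal a keeps the first nonzero diagonal c of K
   and adds a c' + c a' to the next one.  What remains are identities between 3x3
   matrices over F_2, finitely many by the 3-periodicity of the diagonals. *)

From mathcomp Require Import all_boot all_order all_algebra.
From mathcomp Require Import zify.
From Stdlib Require Import FunctionalExtensionality.
Set Implicit Arguments. Unset Strict Implicit. Unset Printing Implicit Defensive.
Import GRing.Theory.
Local Open Scope ring_scope.

Lemma pchar_blk : (2 \in [pchar blk])%N.
Proof.
apply/andP; split=> //; apply/eqP/matrixP=> i j; rewrite !mxE.
by rewrite -natrD addnn -mul2n natrM (pchar_Fp_0 (isT : prime 2)) mul0r.
Qed.

Definition badd (X Y : bmat) : bmat := fun r s => X r s + Y r s.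

Definition zero_below (k : nat) (X : bmat) := forall r s, (s < r + k)%N -> X r s = 0.
Definition eq_below (k : nat) (X Y : bmat) := forall r s, (s < r + k)%N -> X r s = Y r s.
Definition unit_diag (X : bmat) := forall r, X r r = 1%:M.
Definition periodic (X : bmat) := forall r s, X (r + 3)%N (s + 3)%N = X r s.

Lemma bmat_ext (X Y : bmat) : (forall r s, X r s = Y r s) -> X = Y.
Proof. by move=> eXY; do 2!apply: functional_extensionality => ?; apply: eXY. Qed.

Lemma zero_below_le a b X : (a <= b)%N -> zero_below b X -> zero_below a X.
Proof. by move=> le_ab zX r s lt_s; apply: zX; lia. Qed.

Lemma zero_below0_bmul X Y : zero_below 0 (bmul X Y).
Proof. by move=> r s; rewrite addn0 => lt_sr; rewrite /bmul big_geq. Qed.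

Lemma zero_below0_bone : zero_below 0 bone.
Proof. by move=> r s; rewrite addn0 /bone => /ltn_eqF; rewrite eq_sym => ->. Qed.

Lemma zero_below0_bpow X n : zero_below 0 (bpow X n).
Proof. by case: n => [|n]; [exact: zero_below0_bone | exact: zero_below0_bmul]. Qed.

Lemma zero_below_bmul a b X Y :
  zero_below a X -> zero_below b Y -> zero_below (a + b)%N (bmul X Y).
Proof.
move=> zX zY r s lt_s; rewrite /bmul big_nat big1 // => t /andP[_ lt_t].
have [lt_ta|le_at] := ltnP t (r + a); first by rewrite zX ?mul0mx.
by rewrite zY ?mulmx0 //; lia.
Qed.

Lemma zero_below_bpow a X n : zero_below a X -> zero_below (a * n)%N (bpow X n).
Proof.
move=> zX; elim: n => [|n IHn]; first by rewrite muln0; exact: zero_below0_bone.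
by rewrite mulnS; exact: zero_below_bmul.
Qed.

Lemma bmul1 X : zero_below 0 X -> bmul bone X = X.
Proof.
move=> zX; apply: bmat_ext => r s; rewrite /bmul.
have [lt_sr|le_rs] := ltnP s r; first by rewrite big_geq // zX ?addn0.
rewrite big_ltn ?ltnS // /bone eqxx mul1mx big_nat big1 ?addr0 // => t /andP[lt_rt _].
by rewrite (ltn_eqF lt_rt) mul0mx.
Qed.

Lemma bmulx1 X : zero_below 0 X -> bmul X bone = X.
Proof.
move=> zX; apply: bmat_ext => r s; rewrite /bmul.
have [lt_sr|le_rs] := ltnP s r; first by rewrite big_geq // zX ?addn0.
rewrite big_nat_recr //= /bone eqxx mulmx1 big_nat big1 ?add0r // => t /andP[_ lt_ts].
by rewrite (ltn_eqF lt_ts) mulmx0.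
Qed.

Lemma bmulDl X Y Z : bmul (badd X Y) Z = badd (bmul X Z) (bmul Y Z).
Proof.
by apply: bmat_ext => r s; rewrite /bmul /badd -big_split; apply: eq_bigr => t _; rewrite mulmxDl.
Qed.

Lemma bmulDr X Y Z : bmul X (badd Y Z) = badd (bmul X Y) (bmul X Z).
Proof.
by apply: bmat_ext => r s; rewrite /bmul /badd -big_split; apply: eq_bigr => t _; rewrite mulmxDr.
Qed.

Lemma bmulA X Y Z : bmul X (bmul Y Z) = bmul (bmul X Y) Z.
Proof.
apply: bmat_ext => r s; rewrite /bmul.
transitivity (\sum_(r <= u < s.+1) \sum_(r <= t < s.+1 | (u <= t)%N) X r u *m (Y u t *m Z t s)).
  apply: eq_big_nat => u /andP[le_ru _].
  by rewrite (big_nat_widenl _ _ _ _ _ le_ru) mulmx_sumr.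
rewrite (exchange_big_dep_nat predT) //=; apply: eq_big_nat => t /andP[_ lt_ts].
rewrite mulmx_suml (big_nat_widen _ _ _ _ _ lt_ts) /=.
by apply: eq_bigr => u _; rewrite mulmxA.
Qed.

Lemma bpowD X m n : bpow X (m + n)%N = bmul (bpow X m) (bpow X n).
Proof.
elim: m => [|m IHm]; first by rewrite bmul1 //; exact: zero_below0_bpow.
by rewrite addSn /= IHm bmulA.
Qed.

Lemma bpowM X m n : bpow X (m * n)%N = bpow (bpow X m) n.
Proof. by elim: n => [|n IHn]; rewrite ?muln0 // mulnS bpowD IHn. Qed.

Lemma bpow1 X : zero_below 0 X -> bpow X 1 = X.
Proof. exact: bmulx1. Qed.

Lemma bpow2 X : zero_below 0 X -> bpow X 2 = bmul X X.
Proof. by move=> zX; rewrite /= bmulx1. Qed.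

Lemma bmul_window X Y p s m n : (p <= m)%N -> (m <= n <= s.+1)%N ->
  (forall t, (t < m)%N -> X p t = 0) -> (forall t, (n <= t)%N -> Y t s = 0) ->
  bmul X Y p s = \sum_(m <= t < n) X p t *m Y t s.
Proof.
move=> le_pm /andP[le_mn le_ns] zX zY.
rewrite (big_nat_widenl _ _ _ _ _ le_pm) (big_nat_widen _ _ _ _ _ le_ns).
rewrite /bmul [RHS]big_mkcond /=; apply: eq_bigr => t _.
have [le_mt|lt_tm] := leqP m t; last by rewrite zX ?mul0mx.
by have [lt_tn|le_nt] := ltnP t n; rewrite //= zY ?mulmx0.
Qed.

Lemma bmul_entry a b X Y p : zero_below a X -> zero_below b Y ->
  bmul X Y p (p + a + b)%N = X p (p + a)%N *m Y (p + a)%N (p + a + b)%N.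
Proof.
move=> zX zY; rewrite (@bmul_window _ _ _ _ (p + a) (p + a).+1) ?big_nat1 //; try lia.
- by move=> t lt_t; rewrite zX.
- by move=> t lt_t; rewrite zY //; lia.
Qed.

Lemma bmul_entry_next a b X Y p : zero_below a X -> zero_below b Y ->
  bmul X Y p (p + a + b.+1)%N =
    X p (p + a)%N *m Y (p + a)%N (p + a + b.+1)%N
  + X p (p + a.+1)%N *m Y (p + a.+1)%N (p + a + b.+1)%N.
Proof.
move=> zX zY; rewrite (@bmul_window _ _ _ _ (p + a) (p + a).+2); try lia.
- by rewrite big_ltn // big_nat1 -addnS.
- by move=> t lt_t; rewrite zX.
- by move=> t lt_t; rewrite zY //; lia.
Qed.

Lemma bpow2_entries d K p : zero_below d K -> (forall q, K q (q + d).+1%N = 0) ->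
  bpow K 2 p (p + d + d)%N = K p (p + d)%N *m K (p + d)%N (p + d + d)%N /\
  bpow K 2 p (p + d + d).+1%N = 0.
Proof.
move=> zK K_next; rewrite bpow2; last exact: zero_below_le zK.
split; first exact: bmul_entry.
by rewrite -addnS bmul_entry_next // addnS K_next addnS -addSn K_next !(mulmx0, mul0mx) addr0.
Qed.

Lemma eq_below_trans k X Y Z : eq_below k X Y -> eq_below k Y Z -> eq_below k X Z.
Proof. by move=> eXY eYZ r s lt_s; rewrite eXY ?eYZ. Qed.

Lemma eq_below_bmulr a b X Y Y' :
  zero_below a X -> eq_below b Y Y' -> eq_below (a + b)%N (bmul X Y) (bmul X Y').
Proof.
move=> zX eY r s lt_s; apply: eq_big_nat => t /andP[_ lt_t].
have [lt_ta|le_at] := ltnP t (r + a); first by rewrite zX ?mul0mx.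
by rewrite eY //; lia.
Qed.

Lemma zero_below_badd k X Y : zero_below k X -> zero_below k Y -> zero_below k (badd X Y).
Proof. by move=> zX zY r s lt_s; rewrite /badd zX ?zY ?addr0. Qed.

Lemma bpow2_char2 K : zero_below 0 K -> bpow (badd bone K) 2 = badd bone (bpow K 2).
Proof.
move=> zK; have z1K := zero_below_badd zero_below0_bone zK.
rewrite !bpow2 // bmulDl bmul1 // bmulDr bmulx1 //.
apply: bmat_ext => r s; rewrite /badd -addrA; congr (_ + _).
by rewrite addrA (addrr_pchar2 pchar_blk) add0r.
Qed.

Lemma bpow_exp2_char2 K j :
  zero_below 0 K -> bpow (badd bone K) (2 ^ j)%N = badd bone (bpow K (2 ^ j)%N).
Proof.
move=> zK; elim: j => [|j IHj].
  by rewrite !bpow1 //; apply: zero_below_badd => //; exact: zero_below0_bone.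
by rewrite expnSr !bpowM IHj bpow2_char2 //; exact: zero_below0_bpow.
Qed.

Lemma bpow_odd_char2 K l m : zero_below l K ->
  eq_below (l + l)%N (bpow (badd bone K) m) (if odd m then badd bone K else bone).
Proof.
move=> zK; have zK0 := zero_below_le (leq0n l) zK.
have z1K := zero_below_badd zero_below0_bone zK0.
elim: m => [|m IHm] //=; apply: eq_below_trans (eq_below_bmulr z1K IHm) _.
case: (odd m) => /=; last by rewrite bmulx1.
rewrite -bpow2 // bpow2_char2 // => r s lt_s.
have zK2 : zero_below (l + l)%N (bpow K 2).
  by rewrite addnn -mul2n mulnC; exact: zero_below_bpow.
by rewrite /badd zK2 ?addr0.
Qed.

Lemma unit_diag_bmul X Y : unit_diag X -> unit_diag Y -> unit_diag (bmul X Y).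
Proof. by move=> dX dY r; rewrite /bmul big_nat1 dX dY mul1mx. Qed.

Lemma unit_diag_bpow X n : unit_diag X -> unit_diag (bpow X n).
Proof.
move=> dX; elim: n => [|n IHn] r; first by rewrite /= /bone eqxx.
exact: unit_diag_bmul.
Qed.

Lemma periodic_bone : periodic bone.
Proof. by move=> r s; rewrite /bone eqn_add2r. Qed.

Lemma periodic_bmul X Y : periodic X -> periodic Y -> periodic (bmul X Y).
Proof.
move=> pX pY r s; rewrite /bmul -addSn big_addn addnK.
by apply: eq_bigr => t _; rewrite pX pY.
Qed.

Lemma periodic_bpow X n : periodic X -> periodic (bpow X n).
Proof. by move=> pX; elim: n => [|n IHn]; [exact: periodic_bone | exact: periodic_bmul]. Qed.

Lemma bone_above p j : (0 < j)%N -> bone p (p + j)%N = 0.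
Proof. by move=> j_gt0; rewrite /bone ltn_eqF // -{1}[p]addn0 ltn_add2l. Qed.

Definition strict (X : bmat) : bmat := fun r s => if (s <= r)%N then 0 else X r s.

Lemma bone_add_strict X : zero_below 0 X -> unit_diag X -> X = badd bone (strict X).
Proof.
move=> zX dX; apply: bmat_ext => r s; rewrite /badd /strict /bone.
case: ltngtP => [lt_sr|lt_rs|<-]; rewrite ?add0r ?addr0 //.
by rewrite zX ?addn0.
Qed.

Lemma strict_lt X r s : (r < s)%N -> strict X r s = X r s.
Proof. by rewrite /strict ltnNge => /negbTE ->. Qed.

Lemma zero_below1_strict X : zero_below 1 (strict X).
Proof. by move=> r s; rewrite addn1 ltnS /strict => ->. Qed.

(** * Periodic diagonals *)

Lemma sel_mod d p : sel d (p %% 3)%N = sel d p.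
Proof. by case: d => [[a b] c]; rewrite /sel modn_mod. Qed.

Lemma sel_modDl d p k : sel d (p %% 3 + k)%N = sel d (p + k)%N.
Proof. by rewrite -sel_mod modnDml sel_mod. Qed.

Lemma sel_addn3 d p : sel d (p + 3)%N = sel d p.
Proof. by rewrite -sel_mod modnDr sel_mod. Qed.

Lemma sel_add_exp2 d p j : sel d (p + 2 ^ j.+1)%N = sel d (p + if odd j then 1 else 2)%N.
Proof.
have exp2_mod3 : ((2 ^ j.+1) %% 3 = if odd j then 1 else 2)%N.
  by elim: j => [|j IHj] //; rewrite expnS -modnMmr IHj /=; case: (odd j).
by rewrite -sel_mod -modnDmr exp2_mod3 sel_mod.
Qed.

Lemma decode_sel0 p : decode (sel (0, 0, 0)%N p) = 0.
Proof. by apply/matrixP => i j; rewrite /sel !if_same !mxE div0n. Qed.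

Ltac sel_cases p :=
  rewrite -?(sel_modDl _ p) -?(sel_mod _ p);
  case: (p %% 3)%N (ltn_pmod p (isT : (0 < 3)%N)) => [|[|[|//]]] _.

(* Entries are compared with [==]: both sides carry different proofs of the index bounds. *)
Ltac blk_eq :=
  apply/matrixP; case=> [[|[|[|//]]] ?] [[|[|[|//]]] ?];
  rewrite !mxE ?(big_ord_recr, big_ord0) /= ?mxE; apply/eqP; vm_compute; reflexivity.

Lemma zero_below0_mk_mat ds : zero_below 0 (mk_mat ds).
Proof. by move=> r s; rewrite addn0 /mk_mat => ->. Qed.

Lemma unit_diag_mk_mat ds : unit_diag (mk_mat ds).
Proof. by move=> r; rewrite /mk_mat ltnn eqxx. Qed.

Lemma periodic_mk_mat ds : periodic (mk_mat ds).
Proof. by move=> r s; rewrite /mk_mat ltn_add2r eqn_add2r subnDr sel_addn3. Qed.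

Lemma mk_mat_above ds p j : (0 < j)%N ->
  mk_mat ds p (p + j)%N = decode (sel (nth (0, 0, 0)%N ds j.-1) p).
Proof.
move=> j_gt0; rewrite /mk_mat ltnNge leq_addr /= addKn.
by rewrite -{2}[p]addn0 eqn_add2l eqn0Ngt j_gt0.
Qed.

(** * Inverses and conjugation *)

Lemma bmul_sumr X Y (Ys : nat -> bmat) K r s :
  (forall t, (r <= t <= s)%N -> Y t s = \sum_(k < K) Ys k t s) ->
  bmul X Y r s = \sum_(k < K) bmul X (Ys k) r s.
Proof.
move=> eY; rewrite /bmul exchange_big /=.
by apply: eq_big_nat => t r_t_s; rewrite eY ?mulmx_sumr.
Qed.

Lemma bmul_suml X Y (Xs : nat -> bmat) K r s :
  (forall t, (r <= t <= s)%N -> X r t = \sum_(k < K) Xs k r t) ->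
  bmul X Y r s = \sum_(k < K) bmul (Xs k) Y r s.
Proof.
move=> eX; rewrite /bmul exchange_big /=.
by apply: eq_big_nat => t /andP[le_rt lt_ts]; rewrite eX ?mulmx_suml // le_rt -ltnS.
Qed.

Lemma bpowSr X n : zero_below 0 X -> bpow X n.+1 = bmul (bpow X n) X.
Proof. by move=> zX; rewrite -addn1 bpowD bpow1. Qed.

Section Inverse.

Variable X : bmat.
Hypotheses (zX : zero_below 0 X) (dX : unit_diag X).

Let N := bneg_strict X.

Let zN : zero_below 1 N.
Proof.
move=> r s; rewrite addn1 ltnS leq_eqVlt => /predU1P[->|lt_sr].
  by rewrite /N /bneg_strict /bone eqxx dX subrr.
by rewrite /N /bneg_strict zX ?zero_below0_bone ?addn0 ?subr0.
Qed.

Let zN0 : zero_below 0 N := zero_below_le (leq0n 1) zN.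

Let zNpow k : zero_below k (bpow N k).
Proof. by have := @zero_below_bpow 1 N k zN; rewrite mul1n. Qed.

Lemma binv_geom K r s : (s - r < K)%N -> binv X r s = \sum_(k < K) bpow N k r s.
Proof.
move=> lt_K; rewrite /binv (big_ord_widen K (fun k => bpow N k r s)) // big_mkcond /=.
by apply: eq_bigr => k _; case: ltnP => // le_k; rewrite zNpow //; lia.
Qed.

Let bmul_bnegl Y r s : zero_below 0 Y -> bmul X Y r s = Y r s - bmul N Y r s.
Proof.
move=> zY; rewrite -{2}(bmul1 zY) /bmul -sumrB; apply: eq_bigr => t _.
by rewrite -mulmxBl /N /bneg_strict opprB addrC subrK.
Qed.

Let bmul_bnegr Y r s : zero_below 0 Y -> bmul Y X r s = Y r s - bmul Y N r s.
Proof.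
move=> zY; rewrite -{2}(bmulx1 zY) /bmul -sumrB; apply: eq_bigr => t _.
by rewrite -mulmxBr /N /bneg_strict opprB addrC subrK.
Qed.

Let sum_bneg_telescope r s :
  \sum_(k < (s - r).+1) (bpow N k r s - bpow N k.+1 r s) = bone r s.
Proof.
rewrite -(big_mkord xpredT (fun k => bpow N k r s - bpow N k.+1 r s)).
under eq_bigr do rewrite -opprB; rewrite sumrN telescope_sumr // opprB.
by rewrite (@zNpow (s - r).+1) ?subr0 //; lia.
Qed.

Lemma bmul_binv : bmul X (binv X) = bone.
Proof.
apply: bmat_ext => r s; rewrite (@bmul_sumr _ _ (bpow N) (s - r).+1).
  rewrite -sum_bneg_telescope; apply: eq_bigr => k _.
  by rewrite bmul_bnegl //; exact: zero_below0_bpow.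
by move=> t /andP[le_rt _]; apply: binv_geom; lia.
Qed.

Lemma bmul_binvl : bmul (binv X) X = bone.
Proof.
apply: bmat_ext => r s; rewrite (@bmul_suml _ _ (bpow N) (s - r).+1).
  rewrite -sum_bneg_telescope; apply: eq_bigr => k _.
  by rewrite bmul_bnegr -?(bpowSr _ zN0) //; exact: zero_below0_bpow.
by move=> t /andP[_ le_ts]; apply: binv_geom; lia.
Qed.

Lemma zero_below0_binv : zero_below 0 (binv X).
Proof.
move=> r s lt_s; rewrite (@binv_geom 1) ?big_ord1 /= ?zero_below0_bone //; lia.
Qed.

Lemma binv_next q : binv X q q.+1 = X q q.+1.
Proof.
have lt_q : (q.+1 - q < 2)%N by rewrite subSnn.
rewrite (binv_geom lt_q) !big_ord_recr big_ord0 /= add0r (bmulx1 zN0).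
by rewrite /N /bneg_strict /bone ltn_eqF // add0r sub0r (oppr_pchar2 pchar_blk).
Qed.

End Inverse.

Lemma unit_diag_binv X : unit_diag (binv X).
Proof. by move=> r; rewrite /binv subnn big_ord1 /= /bone eqxx. Qed.

Lemma periodic_binv X : periodic X -> periodic (binv X).
Proof.
move=> pX r s; rewrite /binv subnDr; apply: eq_bigr => k _.
by rewrite periodic_bpow // => r' s'; rewrite /bneg_strict periodic_bone pX.
Qed.

Lemma bpow_conj X P n : zero_below 0 X -> unit_diag X ->
  bpow (bmul (bmul X P) (binv X)) n = bmul (bmul X (bpow P n)) (binv X).
Proof.
move=> zX dX; elim: n => [|n IHn] /=; first by rewrite bmulx1 // bmul_binv.
rewrite IHn !bmulA -(bmulA _ (binv X)) bmul_binvl // bmulx1 //.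
exact: zero_below0_bmul.
Qed.

Lemma sandwich_entries X Y K d p :
    zero_below 0 X -> unit_diag X -> zero_below 0 Y -> unit_diag Y -> zero_below d K ->
  bmul (bmul X K) Y p (p + d)%N = K p (p + d)%N /\
  bmul (bmul X K) Y p (p + d).+1%N =
    K p (p + d).+1%N + X p p.+1 *m K p.+1 (p + d).+1%N + K p (p + d)%N *m Y (p + d)%N (p + d).+1%N.
Proof.
move=> zX dX zY dY zK.
have zXK : zero_below d (bmul X K) by rewrite -[d]add0n; exact: zero_below_bmul.
have := bmul_entry p zX zK; have := bmul_entry_next p zX zK.
have := bmul_entry p zXK zY; have := bmul_entry_next p zXK zY.
rewrite !(addn0, addnS, addn1) => -> -> -> ->.
by rewrite dX !dY !mul1mx !mulmx1 addrC.
Qed.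

(* The diagonal conditions of [has_form], required at every row, row 0 included. *)
Definition diag_form (X : bmat) (l : nat) (c1 c2 : diag3) :=
  [/\ forall p j, (0 < j <= l)%N -> X p (p + j)%N = 0,
      forall p, X p (p + l.+1)%N = decode (sel c1 p) &
      forall p, X p (p + l.+2)%N = decode (sel c2 p)].

Lemma has_formP X l c1 c2 : zero_below 0 X -> unit_diag X -> periodic X ->
  diag_form X l c1 c2 -> has_form X l c1 c2.
Proof.
move=> zX dX pX [X0 X1 X2]; split; last by split=> [r j _|]; [exact: X0 | split=> r _].
split=> [r _ //|]; split=> [r s _ lt_sr|r j _ _]; first by rewrite zX ?addn0.
by rewrite -addnA (addnC 3) addnA pX.
Qed.

Lemma diag_form_conj X P l c1 c2 c2' (a : diag3) :
    zero_below 0 X -> unit_diag X -> (forall q, X q q.+1 = decode (sel a q)) ->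
    zero_below 0 P -> unit_diag P -> diag_form P l c1 c2 ->
    (forall p, decode (sel c2 p) + decode (sel a p) *m decode (sel c1 (p + 1)%N)
                 + decode (sel c1 p) *m decode (sel a (p + l.+1)%N) = decode (sel c2' p)) ->
  diag_form (bmul (bmul X P) (binv X)) l c1 c2'.
Proof.
move=> zX dX Xa zP dP [P0 P1 P2] c2E.
have zK : zero_below l.+1 (strict P).
  move=> r s lt_s; rewrite /strict; case: leqP => // lt_rs.
  by rewrite -(subnKC (ltnW lt_rs)) P0 //; lia.
have -> : bmul (bmul X P) (binv X) = badd bone (bmul (bmul X (strict P)) (binv X)).
  by rewrite {1}(bone_add_strict zP dP) bmulDr bmulx1 // bmulDl bmul_binv.
have zC : zero_below l.+1 (bmul (bmul X (strict P)) (binv X)).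
  rewrite -[l.+1]addn0 -[(l.+1 + 0)%N]add0n.
  exact: zero_below_bmul (zero_below_bmul zX zK) (zero_below0_binv zX dX).
have C p := sandwich_entries p zX dX (zero_below0_binv zX dX) (unit_diag_binv X) zK.
split=> p; rewrite /badd.
- by move=> j /andP[j_gt0 le_jl]; rewrite bone_above // zC ?addr0 //; lia.
- by rewrite bone_above // add0r (C p).1 strict_lt ?P1 //; lia.
have P2' : P p (p + l.+1).+1%N = decode (sel c2 p) by rewrite -addnS P2.
have P1' : P p.+1 (p + l.+1).+1%N = decode (sel c1 p.+1) by rewrite -addSn P1.
rewrite bone_above // add0r addnS (C p).2 binv_next // !Xa !strict_lt ?P2' ?P1' ?P1; try lia.
by rewrite -c2E addn1.
Qed.

(** * Powers of x1 *)

Lemma x1_diag1_sqr p :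
  decode (sel (23, 224, 138)%N p) *m decode (sel (23, 224, 138)%N (p + 1)%N)
  = decode (sel (39, 208, 186)%N p).
Proof. by sel_cases p; blk_eq. Qed.

Lemma x1_diag12_cancel p :
  decode (sel (23, 224, 138)%N p) *m decode (sel (59, 136, 495)%N (p + 1)%N)
  + decode (sel (59, 136, 495)%N p) *m decode (sel (23, 224, 138)%N (p + 2)%N) = 0.
Proof. by sel_cases p; blk_eq. Qed.

Lemma Fx1_diag2_sqr p :
  decode (sel (39, 208, 186)%N p) *m decode (sel (39, 208, 186)%N (p + 2)%N)
  = decode (sel (23, 224, 138)%N p).
Proof. by sel_cases p; blk_eq. Qed.

Lemma x1_diag2_addF p :
  decode (sel (59, 136, 495)%N p) + decode (sel (39, 208, 186)%N p)
  = decode (sel (28, 88, 341)%N p).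
Proof. by sel_cases p; blk_eq. Qed.

Lemma zero_below0_x1 : zero_below 0 x1. Proof. exact: zero_below0_mk_mat. Qed.
Lemma unit_diag_x1 : unit_diag x1. Proof. exact: unit_diag_mk_mat. Qed.
Lemma periodic_x1 : periodic x1. Proof. exact: periodic_mk_mat. Qed.

Lemma x1_entry1 p : x1 p (p + 1)%N = decode (sel (23, 224, 138)%N p).
Proof. exact: mk_mat_above. Qed.

Lemma x1_entry2 p : x1 p (p + 2)%N = decode (sel (59, 136, 495)%N p).
Proof. exact: mk_mat_above. Qed.

Definition Fx1 : bmat := bpow (strict x1) 2.

Lemma x1_sqr : bpow x1 2 = badd bone Fx1.
Proof.
rewrite {1}(bone_add_strict zero_below0_x1 unit_diag_x1).
by rewrite bpow2_char2 //; exact: zero_below_le (zero_below1_strict x1).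
Qed.

Lemma zero_below2_Fx1 : zero_below 2 Fx1.
Proof. exact: (@zero_below_bpow 1 _ 2 (zero_below1_strict x1)). Qed.

Lemma Fx1_entry2 p : Fx1 p (p + 2)%N = decode (sel (39, 208, 186)%N p).
Proof.
have zE := zero_below1_strict x1.
rewrite /Fx1 bpow2; last exact: zero_below_le zE.
rewrite (addnA p 1 1) (bmul_entry p zE zE) !strict_lt; try lia.
by rewrite x1_entry1 x1_entry1 x1_diag1_sqr.
Qed.

Lemma Fx1_entry3 p : Fx1 p (p + 3)%N = 0.
Proof.
have zE := zero_below1_strict x1.
rewrite /Fx1 bpow2; last exact: zero_below_le zE.
rewrite (addnA p 1 2) (bmul_entry_next p zE zE) !strict_lt; try lia.
rewrite x1_entry1 x1_entry2 -(addnA p 1 2) (addnA p 2 1).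
by rewrite x1_entry1 x1_entry2 x1_diag12_cancel.
Qed.

Lemma Fx1_pow_exp2 j :
  [/\ zero_below (2 ^ j.+1) (bpow Fx1 (2 ^ j)%N),
      forall p, bpow Fx1 (2 ^ j)%N p (p + 2 ^ j.+1)%N
                = decode (sel (if odd j then (23, 224, 138) else (39, 208, 186))%N p) &
      forall p, bpow Fx1 (2 ^ j)%N p (p + 2 ^ j.+1).+1%N = 0].
Proof.
elim: j => [|j [zG G_diag G_next]].
  rewrite bpow1; last exact: zero_below_le zero_below2_Fx1.
  split=> [|p|p]; [exact: zero_below2_Fx1 | exact: Fx1_entry2 |].
  by rewrite -addnS; exact: Fx1_entry3.
have e2 : (2 ^ j.+2 = 2 ^ j.+1 + 2 ^ j.+1)%N by rewrite expnS mul2n addnn.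
have G2 p := bpow2_entries p zG G_next.
rewrite (expnSr 2 j) bpowM e2; split.
- by rewrite addnn -muln2; exact: zero_below_bpow.
- move=> p; rewrite addnA (G2 p).1 !G_diag sel_add_exp2 /=.
  by case: (odd j); rewrite /= ?x1_diag1_sqr ?Fx1_diag2_sqr.
- by move=> p; rewrite addnA (G2 p).2.
Qed.

Lemma x1_pow_odd k : diag_form (bpow x1 (2 * k + 1)%N) 0 (23, 224, 138)%N
  (if odd k then (28, 88, 341) else (59, 136, 495))%N.
Proof.
have -> : bpow x1 (2 * k + 1)%N = bmul x1 (bpow (badd bone Fx1) k).
  by rewrite addnC bpowD bpow1 ?bpowM ?x1_sqr //; exact: zero_below0_x1.
have := eq_below_bmulr zero_below0_x1 (bpow_odd_char2 k zero_below2_Fx1); rewrite add0n => eP.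
have zx1F := zero_below_bmul zero_below0_x1 zero_below2_Fx1.
have x1F2 p : bmul x1 Fx1 p (p + 2)%N = Fx1 p (p + 2)%N.
  by have := bmul_entry p zero_below0_x1 zero_below2_Fx1; rewrite !addn0 unit_diag_x1 mul1mx.
have x1C : bmul x1 (badd bone Fx1) = badd x1 (bmul x1 Fx1).
  by rewrite bmulDr bmulx1 //; exact: zero_below0_x1.
have x11 : bmul x1 bone = x1 by rewrite bmulx1 //; exact: zero_below0_x1.
split=> [p j /andP[j_gt0 le_j0]|p|p]; first by rewrite leqNgt j_gt0 in le_j0.
- rewrite eP; last lia.
  by case: (odd k); rewrite ?x1C ?x11 /badd ?zx1F ?addr0 ?x1_entry1 //; lia.
- rewrite eP; last lia.
  by case: (odd k); rewrite ?x1C ?x11 /badd ?x1F2 ?Fx1_entry2 x1_entry2 ?x1_diag2_addF.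
Qed.

Lemma x1_pow_even j m : odd m ->
  diag_form (bpow x1 (2 ^ j.+1 * m)%N) (2 ^ j.+1 - 1)%N
    (if odd j then (23, 224, 138) else (39, 208, 186))%N (0, 0, 0)%N.
Proof.
move=> m_odd; have [zG G_diag G_next] := Fx1_pow_exp2 j.
have -> : bpow x1 (2 ^ j.+1 * m)%N = bpow (badd bone (bpow Fx1 (2 ^ j)%N)) m.
  rewrite (expnS 2 j) !bpowM x1_sqr bpow_exp2_char2 //.
  exact: zero_below_le zero_below2_Fx1.
have := bpow_odd_char2 m zG; rewrite m_odd => eP.
have d_ge2 : (2 <= 2 ^ j.+1)%N by rewrite expnS; have := expn_gt0 2 j; lia.
have el : (2 ^ j.+1 - 1).+1%N = (2 ^ j.+1)%N by lia.
split=> [p i /andP[i_gt0 le_i]|p|p]; rewrite ?el eP /badd ?bone_above ?add0r; try lia.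
- by rewrite zG //; lia.
- exact: G_diag.
- by rewrite addnS G_next decode_sel0.
Qed.

(** * Powers of y1 *)

Lemma zero_below0_x2 : zero_below 0 x2. Proof. exact: zero_below0_mk_mat. Qed.
Lemma unit_diag_x2 : unit_diag x2. Proof. exact: unit_diag_mk_mat. Qed.
Lemma periodic_x2 : periodic x2. Proof. exact: periodic_mk_mat. Qed.

Lemma x2_entry1 q : x2 q q.+1 = decode (sel (46, 68, 217)%N q).
Proof. by rewrite -(addn1 q); exact: mk_mat_above. Qed.

Lemma bpow_y1 n : bpow y1 n = bmul (bmul x2 (bpow x1 n)) (binv x2).
Proof. exact: bpow_conj zero_below0_x2 unit_diag_x2. Qed.

Lemma has_form_x1 n l c1 c2 : diag_form (bpow x1 n) l c1 c2 -> has_form (bpow x1 n) l c1 c2.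
Proof.
apply: has_formP; first exact: zero_below0_bpow.
  exact: unit_diag_bpow unit_diag_x1.
exact: periodic_bpow periodic_x1.
Qed.

Lemma has_form_y1 n l c1 c2 : diag_form (bpow y1 n) l c1 c2 -> has_form (bpow y1 n) l c1 c2.
Proof.
apply: has_formP; first exact: zero_below0_bpow.
  apply: unit_diag_bpow; apply: unit_diag_bmul (unit_diag_binv x2).
  exact: unit_diag_bmul unit_diag_x2 unit_diag_x1.
apply: periodic_bpow; apply: periodic_bmul (periodic_binv periodic_x2).
exact: periodic_bmul periodic_x2 periodic_x1.
Qed.

Lemma y1_pow_odd k : diag_form (bpow y1 (2 * k + 1)%N) 0 (23, 224, 138)%N
  (if odd k then (6, 66, 335) else (33, 146, 501))%N.
Proof.
rewrite bpow_y1; apply: diag_form_conj zero_below0_x2 unit_diag_x2 x2_entry1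
  (zero_below0_bpow _ _) (unit_diag_bpow _ unit_diag_x1) (x1_pow_odd k) _.
by move=> p; case: (odd k); sel_cases p; blk_eq.
Qed.

Lemma y1_pow_even j m : odd m ->
  diag_form (bpow y1 (2 ^ j.+1 * m)%N) (2 ^ j.+1 - 1)%N
    (if odd j then (23, 224, 138) else (39, 208, 186))%N
    (if odd j then (26, 26, 26) else (0, 106, 247))%N.
Proof.
move=> m_odd; rewrite bpow_y1; apply: diag_form_conj zero_below0_x2 unit_diag_x2 x2_entry1
  (zero_below0_bpow _ _) (unit_diag_bpow _ unit_diag_x1) (x1_pow_even j m_odd) _.
have -> : (2 ^ j.+1 - 1).+1%N = (2 ^ j.+1)%N by have := expn_gt0 2 j.+1; lia.
by move=> p; rewrite sel_add_exp2; case: (odd j); sel_cases p; blk_eq.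
Qed.

Lemma odd_or_exp2_mul n : (0 < n)%N ->
  (exists k, n = 2 * k + 1)%N \/ (exists j m, odd m /\ n = 2 ^ j.+1 * m)%N.
Proof.
move=> n_gt0; have [m m2 ->] := pfactor_coprime (isT : prime 2) n_gt0.
rewrite coprime2n in m2; case: (logn 2 n) => [|j].
  by left; exists m./2; rewrite -{1}(odd_double_half m) m2 -mul2n muln1 addnC.
by right; exists j, m; rewrite mulnC.
Qed.

Local Close Scope ring_scope.

Theorem proposition4p6 :
  (forall n : nat, (1 <= n)%N ->
     has_form (bpow x1 n) 0 (23, 224, 138)%N (59, 136, 495)%N \/
     has_form (bpow x1 n) 0 (23, 224, 138)%N (28, 88, 341)%N \/
     (exists r : nat, (1 <= r)%N /\ odd r /\
        has_form (bpow x1 n) (2 ^ r - 1) (39, 208, 186)%N (0, 0, 0)%N) \/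
     (exists r : nat, (2 <= r)%N /\ ~~ odd r /\
        has_form (bpow x1 n) (2 ^ r - 1) (23, 224, 138)%N (0, 0, 0)%N)) /\
  (forall n : nat, (1 <= n)%N ->
     has_form (bpow y1 n) 0 (23, 224, 138)%N (33, 146, 501)%N \/
     has_form (bpow y1 n) 0 (23, 224, 138)%N (6, 66, 335)%N \/
     (exists r : nat, (1 <= r)%N /\ odd r /\
        has_form (bpow y1 n) (2 ^ r - 1) (39, 208, 186)%N (0, 106, 247)%N) \/
     (exists r : nat, (2 <= r)%N /\ ~~ odd r /\
        has_form (bpow y1 n) (2 ^ r - 1) (23, 224, 138)%N (26, 26, 26)%N)).
Proof.
split=> n /odd_or_exp2_mul [[k ->]|[j [m [m_odd ->]]]].
- have := x1_pow_odd k; case: (odd k) => /has_form_x1; tauto.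
- have := x1_pow_even j m_odd; case: (boolP (odd j)) => odd_j /has_form_x1 hF; do 2 right.
    right; exists j.+1; split; last by rewrite /= odd_j.
    by rewrite ltnS lt0n; apply: contraTneq odd_j => ->.
  by left; exists j.+1; split; [|rewrite /= odd_j].
- have := y1_pow_odd k; case: (odd k) => /has_form_y1; tauto.
- have := y1_pow_even j m_odd; case: (boolP (odd j)) => odd_j /has_form_y1 hF; do 2 right.
    right; exists j.+1; split; last by rewrite /= odd_j.
    by rewrite ltnS lt0n; apply: contraTneq odd_j => ->.
  by left; exists j.+1; split; [|rewrite /= odd_j].
Qed.
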